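(* Let $d$ be an odd positive integer. For $k=0,1$ consider the formal power series $\mathcal A_{1,k}(c_1,c_2,d)=\sum_{r\ge0}\alpha^{r,d}_{1,k}\in\mathbb Z[[c_1,c_2]]$ (so $\alpha^{r,d}_{1,k}$ is its homogeneous part of degree $r+k$, with $\deg c_1=1,\deg c_2=2$). Then $$\mathcal A_{1,0}(c_1,c_2,d)=\frac{d}{\big(1+\frac{d-1}{2}c_1\big)\big(1-\frac{d+1}{2}c_1\big)+d^2c_2},\qquad \mathcal A_{1,1}(c_1,c_2,d)=\frac{1+\frac{d-1}{2}c_1}{\big(1+\frac{d-1}{2}c_1\big)\big(1-\frac{d+1}{2}c_1\big)+d^2c_2}-1.$$
   Context: Ground field $k$ algebraically closed of characteristic $0$ or $>d$. $E$ is the standard representation of $\mathrm{GL}_2$ with Chern classes $c_1,c_2$; $W_n=\mathrm{Sym}^n(E^\vee)$ is the space of binary forms of degree $n$, $\mathrm{GL}_2$ acting by $f\mapsto f\circ A^{-1}$. $T$ is the diagonal torus, $A^*_T=\mathbb Z[l_1,l_2]$, $c_1=-(l_1+l_2)$, $c_2=l_1l_2$. On $\mathbb P(W_n^{\oplus m})$ the equivariant hyperplane class is normalized so that the coordinate hyperplane where the coefficient of $x^{n-j}y^j$ in one summand vanishes has class (hyperplane class)$+(n-j)l_1+jl_2$; $H$ is this class on $\mathbb P(W_d^{\oplus r+1})$, and $A^*_{\mathrm{GL}_2}(\mathbb P(W_d^{\oplus r+1}))=\mathbb Z[c_1,c_2,H]/(P_{r,d}(H))$, $P_{r,d}(H)=\prod_{j=0}^d(H+(d-j)l_1+jl_2)^{r+1}$.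 For $r\ge0$: $\widetilde Z_1=\mathbb P(W_1)\times\mathbb P(W_{d-1}^{\oplus r+1})$, $\pi_1([c],[g_1,\dots,g_{r+1}])=[cg_1,\dots,cg_{r+1}]$, $h_1$ the pullback of the hyperplane class of $\mathbb P(W_1)$, $\alpha^{r,d}_{1,k}(H)=\pi_{1*}(h_1^k)$ identified with its unique homogeneous representative of degree $r+k$ in $\mathbb Z[c_1,c_2,H]$, and $\alpha^{r,d}_{1,k}:=\alpha^{r,d}_{1,k}(\tfrac{d+1}{2}c_1)\in\mathbb Z[c_1,c_2]$. *)

From HB Require Import structures.
From mathcomp Require Import all_boot all_order all_algebra.
From mathcomp Require Import mpoly.
Set Implicit Arguments. Unset Strict Implicit. Unset Printing Implicit Defensive.
Import Order.TTheory GRing.Theory Num.Theory.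
Local Open Scope ring_scope.

(* A^*_T = Z[l1,l2] *)
Notation RT := {mpoly int[2]}.
Definition l1 : RT := 'X_(@Ordinal 2 0 isT).
Definition l2 : RT := 'X_(@Ordinal 2 1 isT).
(* Chern classes of the standard representation E of GL_2 *)
Definition c1 : RT := - (l1 + l2).
Definition c2 : RT := l1 * l2.

(* weight of the coordinate x^(n-j) y^j of W_n *)
Definition wt (n j : nat) : RT := (n - j)%:R * l1 + j%:R * l2.

(* P_{r,n}(H) = prod_{j=0}^n (H + (n-j) l1 + j l2)^(r+1): the relation of
   A_T(P(W_n^{+(r+1)})) = Z[l1,l2][H]/(P_{r,n}(H)) *)
Definition Prel (r n : nat) : {poly RT} :=
  \prod_(j < n.+1) ('X + (wt n j)%:P) ^+ r.+1.

(* Equivariant integral over P(V), dim V = N, with A_T(P(V)) = A_T[H]/(P(H)),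
   P monic of degree N:  \int_{P(V)} Q(H) = coefficient of H^(N-1) in Q mod P.
   Stated over an arbitrary integral domain A of coefficients. *)
Definition integralP (A : idomainType) (P Q : {poly A}) : A :=
  (Q %% P)`_(size P).-2.

(* Z~_1 = P(W_1) x P(W_{d-1}^{+(r+1)}); h1, h2 its hyperplane classes.
   A_T(Z~_1) = Z[l1,l2][h1,h2]/(Prel 0 1 (h1), Prel r (d-1) (h2)).
   Elements of Z[l1,l2][h1,h2] are represented in {poly {poly RT}}:
   outer variable h1, inner variable h2.  The integral over the product is the
   iterated integral (first over P(W_1) in h1, then over P(W_{d-1}^{r+1})). *)
Definition h1 : {poly {poly RT}} := 'X.
Definition h2 : {poly {poly RT}} := ('X)%:P.

Definition integralZ1 (d r : nat) (F : {poly {poly RT}}) : RT :=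
  integralP (Prel r d.-1) (integralP (map_poly polyC (Prel 0 1)) F).

(* pi_1^* : A_T(P(W_d^{r+1})) -> A_T(Z~_1), H |-> h1 + h2 *)
Definition pullback1 (Q : {poly RT}) : {poly {poly RT}} :=
  (map_poly (fun c : RT => c%:P%:P) Q).[h1 + h2].

(* alpha is (the reduced = homogeneous representative of)
   pi_{1*}(h1^k) in A_T(P(W_d^{r+1})) = Z[l1,l2][H]/(P_{r,d}(H)):
   it has H-degree < (d+1)(r+1) and satisfies the defining duality/projection
   formula  \int_X alpha * Q = \int_{Z~_1} h1^k * pi_1^*Q  for every class Q. *)
Definition is_pushforward1 (d r k : nat) (alpha : {poly RT}) : Prop :=
  (size alpha <= (d.+1 * r.+1))%N /\
  forall Q : {poly RT},
    integralP (Prel r d) (alpha * Q) = integralZ1 d r (h1 ^+ k * pullback1 Q).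

(* alpha^{r,d}_{1,k} := alpha^{r,d}_{1,k}((d+1)/2 * c1) *)
Definition eval_half (d : nat) (alpha : {poly RT}) : RT :=
  alpha.[((d.+1)./2)%:R * c1].

Definition is_homog (n : nat) (p : RT) : bool :=
  all (fun m => mdeg m == n) (msupp p).

(* Formal power series in t over RT, as coefficient sequences.  The
   injective ring map Z[[l1,l2]] -> RT[[t]], f(l1,l2) |-> f(t l1, t l2),
   sends a series with homogeneous parts A_n to sum_n A_n t^n. *)
Definition fps := nat -> RT.
Definition fps_of_poly (p : {poly RT}) : fps := fun n => p`_n.
Definition fps_mul (A B : fps) : fps :=
  fun n => \sum_(i < n.+1) A i * B (n - i)%N.

(* Image in RT[[t]] of the series sum_r alpha^{r,d}_{1,k}, whose degree r+k
   homogeneous part is alpha^{r,d}_{1,k}. *)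
Definition series_A (k : nat) (a : nat -> RT) : fps :=
  fun n => if (k <= n)%N then a (n - k)%N else 0.

(* Image in RT[t] of the denominator
   (1 + (d-1)/2 c1)(1 - (d+1)/2 c1) + d^2 c2  (c1 of degree 1, c2 of degree 2) *)
Definition denomT (d : nat) : {poly RT} :=
  (1 + ((d.-1)./2%:R * c1)%:P * 'X) * (1 - ((d.+1)./2%:R * c1)%:P * 'X)
  + ((d ^ 2)%:R * c2)%:P * 'X ^+ 2.

(* Image of the numerator 1 + (d-1)/2 c1 *)
Definition numT1 (d : nat) : {poly RT} := 1 + ((d.-1)./2%:R * c1)%:P * 'X.

From HB Require Import structures.
From mathcomp Require Import all_boot all_order all_algebra.
From mathcomp Require Import mpoly.
From mathcomp Require Import ring zify.
Import GRing.Theory.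
Local Open Scope ring_scope.
Set Implicit Arguments. Unset Strict Implicit. Unset Printing Implicit Defensive.

(* Integration over P(W_1) is the two-point formula
   (y - x) \int F = F(-x) - F(-y), and substituting H = h1 + h2 at h1 = -l1, -l2
   turns the relation P_{r,d-1}(h2) into P_{r,d}(H) with the factor
   (H + d l2)^{r+1}, resp. (H + d l1)^{r+1}, removed.  Hence
   (l2 - l1) alpha_{1,k}(H) = (-l1)^k (H + d l2)^{r+1} - (-l2)^k (H + d l1)^{r+1},
   and nondegeneracy of the integral pairing makes this the only class of
   H-degree <= (d+1)(r+1) with the projection formula.  At H = (d+1)/2 c1 the two
   bases A, B satisfy (1 - A t)(1 - B t) = denominator, so summing over r is
   summing two geometric series. *)

Section IntegralP.
Variable A : idomainType.
Implicit Types P Q S T F G D : {poly A}.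

Lemma monic_lead_unit P : P \is monic -> lead_coef P \is a GRing.unit.
Proof. by move=> /eqP ->; rewrite unitr1. Qed.

Section MonicModulus.
Variable P : {poly A}.
Hypothesis monP : P \is monic.

Lemma integralPD F G : integralP P (F + G) = integralP P F + integralP P G.
Proof.
by rewrite /integralP Pdiv.IdomainUnit.modpD ?monic_lead_unit // coefD.
Qed.

Lemma integralPZ c F : integralP P (c *: F) = c * integralP P F.
Proof.
by rewrite /integralP Pdiv.IdomainUnit.modpZl ?monic_lead_unit // coefZ.
Qed.

Lemma integralPN F : integralP P (- F) = - integralP P F.
Proof. by rewrite -scaleN1r integralPZ mulN1r. Qed.

Lemma integralPB F G : integralP P (F - G) = integralP P F - integralP P G.
Proof. by rewrite integralPD integralPN. Qed.

Lemma integralPCl c F : integralP P (c%:P * F) = c * integralP P F.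
Proof. by rewrite mul_polyC integralPZ. Qed.

End MonicModulus.

Lemma modp_monic_small P F Q R : P \is monic ->
  F = Q * P + R -> (size R < size P)%N -> F %% P = R.
Proof.
by move=> monP eF sR; rewrite (Pdiv.IdomainUnit.modpP (monic_lead_unit monP) eF).
Qed.

Lemma coef_monicM_top S F n : S \is monic -> (size F <= n.+1)%N ->
  (S * F)`_((size S).-1 + n) = F`_n.
Proof.
move=> monS; have S_gt0 : (0 < size S)%N by rewrite size_poly_gt0 monic_neq0.
rewrite leq_eqVlt => /orP[/eqP sF | sF].
  have F0 : F != 0 by rewrite -size_poly_eq0 sF.
  have := lead_coef_monicM F monS; rewrite /lead_coef size_monicM // sF.
  by have -> : ((size S + n.+1).-1.-1 = (size S).-1 + n)%N by lia.
rewrite !nth_default //; apply: leq_trans (size_polyMleq _ _) _; lia.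
Qed.

Lemma coef_comp_XaddC_top F c n : (size F <= n.+1)%N ->
  (F \Po ('X + c%:P))`_n = F`_n.
Proof.
have s2 := size_XaddC c.
rewrite leq_eqVlt => /orP[/eqP sF | sF]; last by rewrite !nth_default ?size_comp_poly2.
have := @lead_coef_comp _ F ('X + c%:P); rewrite s2 lead_coefXaddC expr1n mulr1.
by rewrite /lead_coef size_comp_poly2 // sF => ->.
Qed.

Lemma integralP_small P F : (size F < size P)%N -> integralP P F = F`_(size P).-2.
Proof. by move=> sF; rewrite /integralP modp_small. Qed.

Lemma integralPMl S T Q : S \is monic -> T \is monic ->
  integralP (S * T) (S * Q) = integralP T Q.
Proof.
move=> monS monT; rewrite /integralP.
move: (Q %/ T) (Q %% T) (Pdiv.IdomainMonic.divp_eq monT Q) (ltn_modpN0 Q (monic_neq0 monT)).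
move=> D R eQ sR.
have S_gt0 : (0 < size S)%N by rewrite size_poly_gt0 monic_neq0.
have -> : (S * Q) %% (S * T) = S * R.
  apply: (modp_monic_small (Q := D)); first by rewrite monicMl.
    by rewrite eQ mulrDr mulrCA mulrA.
  have [->|R0] := eqVneq R 0; first by rewrite mulr0 size_poly0 size_poly_gt0 monic_neq0 ?monicMl.
  rewrite (size_monicM monS R0) (size_monicM monS (monic_neq0 monT)).
  (* [set] merges [size] atoms that differ only in their canonical-instance path,
     which lia would otherwise treat as unrelated. *)
  by move: S_gt0 sR; set a := size S; set b := size R; set c := size T; lia.
rewrite size_monicM ?monic_neq0 //.
have [T1 | T2] := leqP (size T) 1.
  have -> : R = 0 by apply/eqP; rewrite -size_poly_eq0 -leqn0 -ltnS (leq_trans sR T1).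
  by rewrite mulr0 !coef0.
have -> : ((size S + size T).-1.-2 = (size S).-1 + (size T).-2)%N by lia.
by apply: coef_monicM_top => //; move: sR T2; set b := size R; set c := size T; lia.
Qed.

Lemma integralP_comp_XaddC T Q c : T \is monic ->
  integralP (T \Po ('X + c%:P)) (Q \Po ('X + c%:P)) = integralP T Q.
Proof.
move=> monT; have s2 := size_XaddC c; rewrite /integralP.
move: (Q %/ T) (Q %% T) (Pdiv.IdomainMonic.divp_eq monT Q) (ltn_modpN0 Q (monic_neq0 monT)).
move=> D R eQ sR.
have -> : (Q \Po ('X + c%:P)) %% (T \Po ('X + c%:P)) = R \Po ('X + c%:P).
  apply: (modp_monic_small (Q := D \Po ('X + c%:P))).
  - by rewrite monicE lead_coef_comp ?s2 // (eqP monT) lead_coefXaddC expr1n mul1r.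
  - by rewrite eQ comp_polyD comp_polyM.
  - by rewrite !size_comp_poly2.
rewrite size_comp_poly2 // coef_comp_XaddC_top //.
by move: sR; set m := size R; set n := size T; lia.
Qed.

Lemma integralP_deg2 a b F :
  (b - a) * integralP (('X + a%:P) * ('X + b%:P)) F = F.[- a] - F.[- b].
Proof.
set P := ('X + a%:P) * ('X + b%:P).
have monP : P \is monic by rewrite monicMl ?monicXaddC.
have sP : size P = 3 by rewrite size_monicM ?monicXaddC ?monic_neq0 ?monicXaddC // !size_XaddC.
set R := F %% P.
have sR : (size R <= 2)%N.
  by have := ltn_modp F P; rewrite monic_neq0 // sP.
have FE z : P.[z] = 0 -> F.[z] = R`_0 + R`_1 * z.
  move=> Pz; rewrite {1}(Pdiv.IdomainMonic.divp_eq monP F).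
  rewrite hornerD hornerM Pz mulr0 add0r (horner_coef_wide _ sR).
  by rewrite !big_ord_recr big_ord0 /= add0r expr0 mulr1 expr1.
rewrite /integralP sP /= -/R !FE; first by ring.
  by rewrite /P hornerM !hornerD !hornerX !hornerC addNr mulr0.
by rewrite /P hornerM !hornerD !hornerX !hornerC addNr mul0r.
Qed.

Lemma integralP_nondegenerate P D : P \is monic -> (size D < size P)%N ->
  (forall Q, integralP P (D * Q) = 0) -> D = 0.
Proof.
move=> monP sD DQ0; apply/eqP/negPn/negP => D0.
have D_gt0 : (0 < size D)%N by rewrite size_poly_gt0.
have := DQ0 'X^((size P).-1 - size D).
rewrite integralP_small; last by rewrite size_mulXn //; lia.
have -> : ((size P).-2 = (size P).-1 - size D + (size D).-1)%N by lia.
by rewrite coefMXn ltnNge leq_addr /= addKn -lead_coefE => /eqP; rewrite lead_coef_eq0 (negPf D0).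
Qed.

Lemma size_exp_XaddC n c : size (('X + c%:P) ^+ n : {poly A}) = n.+1.
Proof. by rewrite -[c]opprK polyCN size_exp_XsubC. Qed.

Lemma monic_prod_XaddC_exp n m (c : nat -> A) :
  \prod_(j < n) ('X + (c j)%:P) ^+ m \is monic.
Proof. by apply: monic_prod => j _; rewrite monic_exp ?monicXaddC. Qed.

Lemma size_prod_XaddC_exp n m (c : nat -> A) :
  size (\prod_(j < n) ('X + (c j)%:P) ^+ m) = (n * m).+1.
Proof.
elim: n => [|n IHn]; first by rewrite big_ord0 size_poly1.
rewrite big_ord_recr /= size_monicM ?monic_prod_XaddC_exp ?monic_neq0 ?monic_exp ?monicXaddC //.
by rewrite IHn size_exp_XaddC mulSn addSn addnC.
Qed.

End IntegralP.

Section AlphaExpr.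
Variable R : comRingType.
Implicit Types x y a b : R.

Definition geom_sum x y n : R := \sum_(i < n) x ^+ (n.-1 - i) * y ^+ i.

Lemma subrXX_geom x y n : x ^+ n - y ^+ n = (x - y) * geom_sum x y n.
Proof. exact: subrXX. Qed.

Definition alpha_expr x y a b (d k n : nat) : R :=
  (- x) ^+ k * d%:R * geom_sum a b n + geom_sum (- x) (- y) k * b ^+ n.

Lemma alpha_exprE x y a b d k n : a - b = d%:R * (y - x) ->
  (y - x) * alpha_expr x y a b d k n = (- x) ^+ k * a ^+ n - (- y) ^+ k * b ^+ n.
Proof.
move=> eab; rewrite /alpha_expr mulrDr.
have -> : (y - x) * ((- x) ^+ k * d%:R * geom_sum a b n) =
    (- x) ^+ k * ((a - b) * geom_sum a b n) by rewrite eab; ring.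
have -> : (y - x) * (geom_sum (- x) (- y) k * b ^+ n) =
    (- x - - y) * geom_sum (- x) (- y) k * b ^+ n by ring.
by rewrite -!subrXX_geom; ring.
Qed.

End AlphaExpr.

Lemma rmorph_alpha_expr (R S : comRingType) (f : {rmorphism R -> S}) (x y a b : R) d k n :
  f (alpha_expr x y a b d k n) = alpha_expr (f x) (f y) (f a) (f b) d k n.
Proof.
rewrite /alpha_expr /geom_sum rmorphD !rmorphM !rmorph_sum !rmorphXn rmorphN rmorph_nat.
by congr (_ * _ * _ + _ * _); apply: eq_bigr => i _; rewrite rmorphM !rmorphXn ?rmorphN.
Qed.

(* Prel, integralZ1, pullback1 and is_pushforward1 with (l1, l2) replaced by
   (x, y) in an arbitrary integral domain; at (x, y) = (l1, l2) they unfold to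
   the original definitions. *)
Section Localization.
Variables (R : idomainType) (x y : R).

Definition weight n j : R := (n - j)%:R * x + j%:R * y.

Definition relP r n : {poly R} := \prod_(j < n.+1) ('X + (weight n j)%:P) ^+ r.+1.

Definition integralZ d r (F : {poly {poly R}}) : R :=
  integralP (relP r d.-1) (integralP (map_poly polyC (relP 0 1)) F).

Definition pullback (Q : {poly R}) : {poly {poly R}} :=
  (map_poly (fun c : R => c%:P%:P) Q).['X + ('X)%:P].

Definition is_pushforward d r k (a : {poly R}) : Prop :=
  (size a <= (d.+1 * r.+1))%N /\
  forall Q, integralP (relP r d) (a * Q) = integralZ d r ('X ^+ k * pullback Q).

Definition relP_belast r d : {poly R} := \prod_(j < d) ('X + (weight d j)%:P) ^+ r.+1.
Definition relP_behead r d : {poly R} := \prod_(j < d) ('X + (weight d j.+1)%:P) ^+ r.+1.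

Lemma relP_monic r n : relP r n \is monic.
Proof. exact: (monic_prod_XaddC_exp _ _ (weight n)). Qed.

Lemma size_relP r n : size (relP r n) = (n.+1 * r.+1).+1.
Proof. exact: (size_prod_XaddC_exp _ _ (weight n)). Qed.

Lemma relP_belast_monic r d : relP_belast r d \is monic.
Proof. exact: (monic_prod_XaddC_exp _ _ (weight d)). Qed.

Lemma relP_behead_monic r d : relP_behead r d \is monic.
Proof. exact: (monic_prod_XaddC_exp _ _ (fun j => weight d j.+1)). Qed.

Lemma relP_belastE r d : relP r d = ('X + (weight d d)%:P) ^+ r.+1 * relP_belast r d.
Proof. by rewrite /relP big_ord_recr mulrC. Qed.

Lemma relP_beheadE r d : relP r d = ('X + (weight d 0)%:P) ^+ r.+1 * relP_behead r d.
Proof. by rewrite /relP big_ord_recl. Qed.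

Lemma relP_belast_comp r d : relP r d = relP_belast r d.+1 \Po ('X + (- x)%:P).
Proof.
rewrite /relP_belast rmorph_prod; apply: eq_bigr => j _.
have jd : (j <= d)%N by rewrite -ltnS.
have -> : weight d j = - x + weight d.+1 j by rewrite /weight (subSn jd) mulrSr; ring.
by rewrite rmorphXn /= comp_polyD comp_polyX comp_polyC -addrA -polyCD.
Qed.

Lemma relP_behead_comp r d : relP r d = relP_behead r d.+1 \Po ('X + (- y)%:P).
Proof.
rewrite /relP_behead rmorph_prod; apply: eq_bigr => j _.
have -> : weight d j = - y + weight d.+1 j.+1 by rewrite /weight subSS mulrSr; ring.
by rewrite rmorphXn /= comp_polyD comp_polyX comp_polyC -addrA -polyCD.
Qed.

Lemma horner_pullback k Q v : ('X ^+ k * pullback Q).[v] = v ^+ k * (Q \Po ('X + v)).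
Proof.
rewrite hornerM hornerXn /pullback -[_.[v]]/(horner_eval v _) -horner_map -map_poly_comp.
congr (_ * _.[_]); last by rewrite /= horner_evalE hornerD hornerX hornerC addrC.
by apply: eq_map_poly => c /=; rewrite horner_evalE hornerC.
Qed.

Lemma map_relP01 : map_poly polyC (relP 0 1) = ('X + x%:P%:P) * ('X + y%:P%:P).
Proof.
rewrite /relP big_ord_recl big_ord1 !expr1 rmorphM /= !map_polyXaddC.
have -> : weight 1 (@ord0 1) = x by rewrite /weight subn0 mul1r mul0r addr0.
by have -> : weight 1 (lift (@ord0 1) ord0) = y by rewrite /weight subnn mul0r add0r mul1r.
Qed.

Lemma integralZ_pullback d r k Q : (0 < d)%N ->
  (y - x) * integralZ d r ('X ^+ k * pullback Q) =
  (- x) ^+ k * integralP (relP_belast r d) Q - (- y) ^+ k * integralP (relP_behead r d) Q.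
Proof.
case: d => [|d] // _.
rewrite /integralZ map_relP01 /= -integralPCl ?relP_monic // polyCB integralP_deg2.
rewrite !horner_pullback -!polyCN -!rmorphXn /= integralPB ?relP_monic //.
rewrite !integralPCl ?relP_monic // {1}relP_belast_comp {1}relP_behead_comp.
by rewrite !integralP_comp_XaddC ?relP_belast_monic ?relP_behead_monic.
Qed.

Definition alpha1 d r k : {poly R} :=
  alpha_expr x%:P y%:P ('X + (weight d d)%:P) ('X + (weight d 0)%:P) d k r.+1.

Lemma weight_last_sub_first d : weight d d - weight d 0 = d%:R * (y - x).
Proof. by rewrite /weight subnn subn0; ring. Qed.

Lemma alpha1E d r k : (y - x) *: alpha1 d r k =
  (- x) ^+ k *: ('X + (weight d d)%:P) ^+ r.+1 - (- y) ^+ k *: ('X + (weight d 0)%:P) ^+ r.+1.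
Proof.
rewrite -!mul_polyC !rmorphXn !rmorphN rmorphB; apply: alpha_exprE.
by rewrite opprD addrACA subrr add0r -polyCB weight_last_sub_first rmorphM rmorph_nat rmorphB.
Qed.

Lemma integralP_alpha1 d r k Q :
  (y - x) * integralP (relP r d) (alpha1 d r k * Q) =
  (- x) ^+ k * integralP (relP_belast r d) Q - (- y) ^+ k * integralP (relP_behead r d) Q.
Proof.
rewrite -integralPZ ?relP_monic // scalerAl alpha1E mulrBl integralPB ?relP_monic //.
rewrite -!scalerAl !integralPZ ?relP_monic //.
rewrite {1}relP_belastE relP_beheadE !integralPMl ?relP_belast_monic ?relP_behead_monic //.
all: by rewrite monic_exp ?monicXaddC.
Qed.

Lemma pushforward_unique d r k a b :
  is_pushforward d r k a -> is_pushforward d r k b -> a = b.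
Proof.
move=> [sa ea] [sb eb]; apply/eqP; rewrite -subr_eq0; apply/eqP.
apply: (integralP_nondegenerate (relP_monic r d)).
  rewrite size_relP ltnS; apply: leq_trans (size_polyD _ _) _.
  by rewrite size_polyN geq_max sa sb.
by move=> Q; rewrite mulrBl integralPB ?relP_monic // ea eb subrr.
Qed.

Lemma horner_alpha1 d r k h : (alpha1 d r k).[h] =
  alpha_expr x y (h + weight d d) (h + weight d 0) d k r.+1.
Proof.
rewrite -horner_evalE /alpha1 rmorph_alpha_expr /= !horner_evalE.
by rewrite !hornerD hornerX !hornerC.
Qed.

Lemma horner_alpha1E d r k h : (y - x) * (alpha1 d r k).[h] =
  (- x) ^+ k * (h + weight d d) ^+ r.+1 - (- y) ^+ k * (h + weight d 0) ^+ r.+1.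
Proof.
rewrite horner_alpha1 alpha_exprE //.
by rewrite opprD addrACA subrr add0r weight_last_sub_first.
Qed.

Hypothesis yx_neq0 : y - x != 0.

Lemma size_alpha1 d r k : (size (alpha1 d r k) <= r.+2)%N.
Proof.
rewrite -(size_scale _ yx_neq0) alpha1E.
apply: leq_trans (size_polyD _ _) _; rewrite size_polyN geq_max.
by rewrite !(leq_trans (size_scale_leq _ _)) ?size_exp_XaddC.
Qed.

Lemma alpha1_pushforward d r k : (0 < d)%N -> is_pushforward d r k (alpha1 d r k).
Proof.
move=> d_gt0; split.
  by apply: leq_trans (size_alpha1 d r k) _; rewrite mulSn -addn1 leq_add2l muln_gt0 d_gt0.
by move=> Q; apply: (mulfI yx_neq0); rewrite integralP_alpha1 integralZ_pullback.
Qed.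

End Localization.

Section Convolution.
Variable R : comRingType.
Implicit Types u v w : nat -> R.

Definition conv u v n : R := \sum_(i < n.+1) u i * v (n - i)%N.

Lemma eq_convl u u' v : u =1 u' -> conv u v =1 conv u' v.
Proof. by move=> eu n; apply: eq_bigr => i _; rewrite eu. Qed.

Lemma convZl c u v n : conv (fun m => c * u m) v n = c * conv u v n.
Proof. by rewrite /conv big_distrr; apply: eq_bigr => i _; rewrite -mulrA. Qed.

Lemma convBl u w v n : conv (fun m => u m - w m) v n = conv u v n - conv w v n.
Proof. by rewrite /conv -sumrB; apply: eq_bigr => i _; rewrite mulrBl. Qed.

Lemma conv_delta c v n : conv (fun m => if m == 0%N then c else 0) v n = c * v n.
Proof. by rewrite /conv big_ord_recl /= subn0 big1 ?addr0 // => i _; rewrite mul0r. Qed.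

Lemma coef_quadratic (a b : R) j :
  (1 + a%:P * 'X + b%:P * 'X ^+ 2)`_j =
  if j == 0%N then 1 else if j == 1%N then a else if j == 2%N then b else 0.
Proof.
rewrite !coefD coef1 !coefCM coefX coefXn.
by case: j => [|[|[|j]]] /=; rewrite ?mulr0 ?mulr1 ?addr0 ?add0r.
Qed.

Lemma quadratic_factor (A B : R) : (1 - A%:P * 'X) * (1 - B%:P * 'X) =
  1 + (- (A + B))%:P * 'X + (A * B)%:P * 'X ^+ 2.
Proof. by rewrite polyCN polyCD polyCM; ring. Qed.

Lemma conv_geom2 (A B p q : R) :
  conv (fun n => p * A ^+ n - q * B ^+ n)
    (fun n => ((1 - A%:P * 'X) * (1 - B%:P * 'X))`_n) =1
  (fun n => ((p - q)%:P + (q * A - p * B)%:P * 'X)`_n).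
Proof.
move=> n; rewrite quadratic_factor /conv coefD coefCM coefC coefX.
case: n => [|[|n]].
- by rewrite big_ord_recl big_ord0 coef_quadratic /=; ring.
- by rewrite !big_ord_recl big_ord0 !coef_quadratic /=; ring.
rewrite !big_ord_recr big1 /=; last first.
  move=> i _; rewrite coef_quadratic.
  have [m ->] : exists m, (n.+2 - i = m.+3)%N by exists (n - i).-1; move: (ltn_ord i); lia.
  by rewrite mulr0.
have -> : (n.+2 - n = 2)%N by rewrite -addn2 addKn.
by rewrite subSn // !subnn !coef_quadratic /= !exprS; ring.
Qed.

End Convolution.

(* conv, shift_seq, half_pt, denom and numer are fps_mul, series_A, the point
   of eval_half, denomT and numT1 over an arbitrary ring. *)
Section SeriesAtHalfPoint.
Variables (R : idomainType) (x y : R).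

Definition shift_seq k (a : nat -> R) n : R := if (k <= n)%N then a (n - k)%N else 0.

Definition half_pt d : R := ((d.+1)./2)%:R * - (x + y).

Definition denom d : {poly R} :=
  (1 + (((d.-1)./2)%:R * - (x + y))%:P * 'X) * (1 - (((d.+1)./2)%:R * - (x + y))%:P * 'X)
  + ((d ^ 2)%:R * (x * y))%:P * 'X ^+ 2.

Definition numer d : {poly R} := 1 + (((d.-1)./2)%:R * - (x + y))%:P * 'X.

Variable e : nat.
Let d := e.*2.+1.
Let A := half_pt d + weight x y d d.
Let B := half_pt d + weight x y d 0.

Lemma half_odd_succ : (d.+1)./2 = e.+1.
Proof. by rewrite /d -[e.*2.+2]/((e.+1).*2) doubleK. Qed.

Lemma half_odd_pred : (d.-1)./2 = e.
Proof. by rewrite /d /= doubleK. Qed.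

Lemma natr_odd : (d%:R : R) = e%:R + e%:R + 1.
Proof. by rewrite /d -addnn -addn1 !natrD. Qed.

Lemma denom_factor : denom d = (1 - A%:P * 'X) * (1 - B%:P * 'X).
Proof.
have quad (p q s : R) : (1 + p%:P * 'X) * (1 - q%:P * 'X) + s%:P * 'X ^+ 2 =
    1 + (p - q)%:P * 'X + (s - p * q)%:P * 'X ^+ 2.
  by rewrite !rmorphB rmorphM /=; ring.
rewrite quadratic_factor /denom quad half_odd_succ half_odd_pred.
rewrite /A /B /half_pt /weight half_odd_succ subnn subn0 natrX natr_odd mulrSr.
by congr (1 + _%:P * 'X + _%:P * 'X ^+ 2); ring.
Qed.

Lemma numer_scale : (y - x) *: numer d =
  (- x - - y)%:P + (- y * A - - x * B)%:P * 'X.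
Proof.
rewrite /numer -mul_polyC mulrDr mulr1 mulrA -rmorphM half_odd_pred.
rewrite /A /B /half_pt /weight half_odd_succ subnn subn0 natr_odd mulrSr.
by congr (_%:P + _%:P * 'X); ring.
Qed.

Hypothesis yx_neq0 : y - x != 0.

Lemma conv_alpha1_k0 :
  conv (shift_seq 0 (fun r => (alpha1 x y d r 0).[half_pt d])) (fun n => (denom d)`_n) =1
  (fun n => (d%:R%:P)`_n).
Proof.
move=> n; apply: (mulfI yx_neq0); rewrite -convZl.
rewrite (eq_convl _ (u' := fun m => A * A ^+ m - B * B ^+ m)); last first.
  by move=> m; rewrite /shift_seq subn0 horner_alpha1E !expr0 !mul1r !exprS.
rewrite denom_factor conv_geom2 [B * A]mulrC subrr polyC0 mul0r addr0 !coefC.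
have -> : A - B = d%:R * (y - x).
  by rewrite /A /B opprD addrACA subrr add0r weight_last_sub_first.
by case: (n == 0%N); rewrite ?mulr0 // mulrC.
Qed.

Lemma conv_alpha1_k1 :
  conv (shift_seq 1 (fun r => (alpha1 x y d r 1).[half_pt d])) (fun n => (denom d)`_n) =1
  (fun n => (numer d - denom d)`_n).
Proof.
move=> n; apply: (mulfI yx_neq0); rewrite -convZl.
pose u m := - x * A ^+ m - - y * B ^+ m.
rewrite (eq_convl _ (u' := fun m => u m - (if m == 0%N then y - x else 0))); last first.
  case=> [|m]; first by rewrite /u /shift_seq /= !expr0 !mulr1 mulr0; ring.
  by rewrite /u /shift_seq /= subn1 horner_alpha1E !expr1 subr0.
by rewrite convBl conv_delta denom_factor conv_geom2 -numer_scale coefZ -mulrBr -coefB.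
Qed.

End SeriesAtHalfPoint.

Lemma l2_sub_l1_neq0 : l2 - l1 != 0.
Proof.
apply/eqP => /(congr1 (meval (fun i : 'I_2 => (i : nat)%:Z))).
by rewrite mevalB /l1 /l2 !mevalXU meval0.
Qed.

Lemma dhomog_l1 : l1 \is 1.-homog.
Proof. by rewrite dhomogX /= mdeg1. Qed.

Lemma dhomog_l2 : l2 \is 1.-homog.
Proof. by rewrite dhomogX /= mdeg1. Qed.

Lemma dhomog_geom_sum (a b : RT) n : a \is 1.-homog -> b \is 1.-homog ->
  geom_sum a b n.+1 \is n.-homog.
Proof.
move=> ha hb; apply: rpred_sum => i _.
have := dhomogM (dhomogMn (n - i) ha) (dhomogMn i hb).
by rewrite !mul1n subnK // -ltnS.
Qed.

Lemma dhomog_alpha_expr (x y a b : RT) d k n :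
  x \is 1.-homog -> y \is 1.-homog -> a \is 1.-homog -> b \is 1.-homog ->
  alpha_expr x y a b d k n.+1 \is (k + n).-homog.
Proof.
move=> hx hy ha hb; rewrite /alpha_expr.
have hnx : - x \is 1.-homog by rewrite rpredN.
have hny : - y \is 1.-homog by rewrite rpredN.
apply: rpredD.
  rewrite mulr_natr; apply: dhomogM (dhomog_geom_sum _ ha hb).
  by rewrite rpredMn //; have := dhomogMn k hnx; rewrite mul1n.
case: k => [|k]; first by rewrite /geom_sum big_ord0 mul0r rpred0.
by have := dhomogM (dhomog_geom_sum k hnx hny) (dhomogMn n.+1 hb); rewrite mul1n addSnnS.
Qed.

Lemma dhomog_half_pt_weight d n j : half_pt l1 l2 d + weight l1 l2 n j \is 1.-homog.
Proof.
have hl := (dhomog_l1, dhomog_l2).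
by rewrite /half_pt /weight !rpredD // ?mulr_natl ?rpredMn ?rpredN ?rpredD ?hl.
Qed.

Lemma dhomog_eval_half_alpha1 d r k : eval_half d (alpha1 l1 l2 d r k) \is (k + r).-homog.
Proof.
rewrite [eval_half _ _]horner_alpha1 dhomog_alpha_expr ?dhomog_l1 ?dhomog_l2 //;
  exact: dhomog_half_pt_weight.
Qed.

Theorem mainTheorem8 (d : nat) (hd : odd d) :
  (forall k : nat, (k <= 1)%N -> forall r : nat,
     exists alpha : {poly RT}, is_pushforward1 d r k alpha) /\
  (forall alpha : nat -> {poly RT},
     (forall r, is_pushforward1 d r 0 (alpha r)) ->
     (forall r, is_homog r (eval_half d (alpha r))) /\
     fps_mul (series_A 0 (fun r => eval_half d (alpha r))) (fps_of_poly (denomT d))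
       =1 fps_of_poly (d%:R%:P)) /\
  (forall alpha : nat -> {poly RT},
     (forall r, is_pushforward1 d r 1 (alpha r)) ->
     (forall r, is_homog r.+1 (eval_half d (alpha r))) /\
     fps_mul (series_A 1 (fun r => eval_half d (alpha r))) (fps_of_poly (denomT d))
       =1 fps_of_poly (numT1 d - denomT d)).
Proof.
have [e ->] : exists e, d = e.*2.+1 by exists d./2; rewrite -[LHS]odd_double_half hd.
have alphaP k r : is_pushforward1 e.*2.+1 r k (alpha1 l1 l2 e.*2.+1 r k).
  exact: alpha1_pushforward l2_sub_l1_neq0 _ _ _ _.
have alphaU k a : (forall r, is_pushforward1 e.*2.+1 r k (a r)) ->
    forall r, a r = alpha1 l1 l2 e.*2.+1 r k.
  by move=> ha r; apply: pushforward_unique (ha r) (alphaP k r).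
split; first by move=> k _ r; exists (alpha1 l1 l2 e.*2.+1 r k).
split=> a /alphaU ea; split=> [r|n]; rewrite ?ea.
- exact: dhomog_eval_half_alpha1.
- apply: etrans (conv_alpha1_k0 e l2_sub_l1_neq0 n); apply: eq_convl => m.
  by rewrite /series_A /shift_seq /eval_half ea.
- exact: dhomog_eval_half_alpha1.
- apply: etrans (conv_alpha1_k1 e l2_sub_l1_neq0 n); apply: eq_convl => m.
  by rewrite /series_A /shift_seq /eval_half ea.
Qed.
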